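(* Let $d,n,k\ge 1$ be integers and let $\mathcal{L}_{\leq d}(n,k)$ be the set of lonesum $0$-$1$ matrices with $n$ rows and $k$ columns having no all-zero row and no all-zero column, in which at most $d$ columns are of the same type and at most $d$ rows are of the same type. Then $\mathcal{L}_{\leq d}(n,k)$ is non-empty if and only if $\lceil n/d\rceil\leq k\leq nd$; i.e. $|\mathcal{L}_{\leq d}(n,k)|=0$ if $k<\lceil n/d\rceil$ or $k>nd$.
   Context: A $0$-$1$ matrix is lonesum if it is uniquely determined by its row sum vector and column sum vector; equivalently, it contains no $2\times 2$ submatrix equal to $\begin{pmatrix}1&0\\0&1\end{pmatrix}$ or $\begin{pmatrix}0&1\\1&0\end{pmatrix}$. Two rows (resp. columns) are of the same type iff they are identical vectors. *)

From mathcomp Require Import all_boot all_order all_algebra.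
Set Implicit Arguments. Unset Strict Implicit. Unset Printing Implicit Defensive.

Definition rowsum n k (A : 'M[bool]_(n, k)) (i : 'I_n) : nat :=
  \sum_(j < k) nat_of_bool (A i j).
Definition colsum n k (A : 'M[bool]_(n, k)) (j : 'I_k) : nat :=
  \sum_(i < n) nat_of_bool (A i j).

Definition lonesum n k (A : 'M[bool]_(n, k)) : Prop :=
  forall B : 'M[bool]_(n, k),
    (forall i, rowsum B i = rowsum A i) ->
    (forall j, colsum B j = colsum A j) -> B = A.

Definition no_zero_row n k (A : 'M[bool]_(n, k)) : Prop :=
  forall i : 'I_n, exists j : 'I_k, A i j.
Definition no_zero_col n k (A : 'M[bool]_(n, k)) : Prop :=
  forall j : 'I_k, exists i : 'I_n, A i j.

Definition rows_at_most n k (d : nat) (A : 'M[bool]_(n, k)) : Prop :=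
  forall i : 'I_n, #|[set i' : 'I_n | row i' A == row i A]| <= d.
Definition cols_at_most n k (d : nat) (A : 'M[bool]_(n, k)) : Prop :=
  forall j : 'I_k, #|[set j' : 'I_k | col j' A == col j A]| <= d.

Definition in_L d n k (A : 'M[bool]_(n, k)) : Prop :=
  [/\ lonesum A, no_zero_row A, no_zero_col A, rows_at_most d A & cols_at_most d A].

From mathcomp Require Import all_boot all_order all_algebra all_fingroup.
From mathcomp Require Import zify.

Set Implicit Arguments.
Unset Strict Implicit.
Unset Printing Implicit Defensive.
Import GRing.Theory Num.Theory.

(* In a lonesum matrix two rows with the same row sum are equal, since
   swapping them changes no margin.  Without zero rows the row sums lie in
   1..k, so there are at most k row types and n <= k d; transposing gives
   k <= n d.  Conversely, for m = min(n, k) the staircase matrix with entries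
   [j mod m <= i mod m] is a threshold matrix, hence lonesum, and its rows
   (columns) are classified by their index mod m, classes of size at most d
   as soon as n <= m d (k <= m d). *)

Lemma card_le_mul_fibers (T T' : finType) (h : T -> T') d :
  (forall s, #|[set t | h t == s]| <= d) -> #|T| <= #|T'| * d.
Proof.
move=> le_fiber; rewrite -sum1_card (partition_big h predT) //= -sum_nat_const.
apply: leq_sum => s _; apply: leq_trans (le_fiber s).
by rewrite sum1_card; apply: subset_leq_card; apply/subsetP => t; rewrite !inE.
Qed.

Lemma card_mod_fiber N m d t : 0 < m -> N <= m * d ->
  #|[set i : 'I_N | i %% m == t]| <= d.
Proof.
move=> m_gt0 le_N_md; case: d le_N_md => [|d] le_N_md.
  by apply: leq_trans (max_card _) _; rewrite card_ord; lia.
have quo_lt (i : 'I_N) : i %/ m < d.+1.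
  by rewrite ltn_divLR //; have := ltn_ord i; lia.
pose quo (i : 'I_N) : 'I_d.+1 := Ordinal (quo_lt i).
rewrite -(card_in_imset (f := quo)); first by apply: leq_trans (max_card _) _; rewrite card_ord.
move=> a b; rewrite !inE => /eqP mod_a /eqP mod_b [quo_ab]; apply: val_inj => /=.
by rewrite (divn_eq a m) (divn_eq b m) quo_ab mod_a mod_b.
Qed.

Section Transpose.
Local Open Scope ring_scope.

Lemma rowsum_trmx n k (A : 'M[bool]_(n, k)) j : rowsum A^T j = colsum A j.
Proof. by apply: eq_bigr => i _; rewrite mxE. Qed.

Lemma colsum_trmx n k (A : 'M[bool]_(n, k)) i : colsum A^T i = rowsum A i.
Proof. by apply: eq_bigr => j _; rewrite mxE. Qed.

Variables (n k : nat) (A : 'M[bool]_(n, k)).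

Lemma lonesum_trmx : lonesum A -> lonesum A^T.
Proof.
move=> lonesumA B eq_rows eq_cols; rewrite -[B]trmxK; congr (_^T); apply: lonesumA.
- by move=> i; rewrite rowsum_trmx eq_cols colsum_trmx.
- by move=> j; rewrite colsum_trmx eq_rows rowsum_trmx.
Qed.

Lemma no_zero_row_trmx : no_zero_col A -> no_zero_row A^T.
Proof. by move=> nzA j; have [i Aij] := nzA j; exists i; rewrite mxE. Qed.

Lemma rows_at_most_trmx d : rows_at_most d A^T <-> cols_at_most d A.
Proof.
have row_classes j : [set j' | row j' A^T == row j A^T] = [set j' | col j' A == col j A].
  by apply/setP => j'; rewrite !inE -!tr_col (inj_eq trmx_inj).
by split=> le_d j; [rewrite -row_classes | rewrite row_classes]; apply: le_d.
Qed.

End Transpose.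

Section RowTypes.
Variables (n k : nat) (A : 'M[bool]_(n, k)).

Lemma lonesum_row_eq i i' :
  lonesum A -> rowsum A i = rowsum A i' -> row i A = row i' A.
Proof.
move=> lonesumA eq_sum.
pose B : 'M[bool]_(n, k) := (\matrix_(a, b) A (tperm i i' a) b)%R.
have eq_BA : B = A.
  apply: lonesumA => [a|b]; rewrite /rowsum /colsum.
  - by under eq_bigr => b _ do rewrite mxE; case: tpermP => [->|->|_ _].
  - under eq_bigr => a _ do rewrite mxE.
    by rewrite [RHS](reindex_inj (@perm_inj _ (tperm i i'))).
by apply/rowP => b; rewrite !mxE -{1}eq_BA mxE tpermL.
Qed.

Lemma rowsum_le i : rowsum A i <= k.
Proof.
rewrite -[leqRHS]card_ord -sum1_card; apply: leq_sum => j _; exact: leq_b1.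
Qed.

Lemma rowsum_gt0 i j : A i j -> 0 < rowsum A i.
Proof. by move=> Aij; rewrite /rowsum (bigD1 j) //= Aij. Qed.

Lemma lonesum_rows_bound d :
  lonesum A -> no_zero_row A -> rows_at_most d A -> n <= k * d.
Proof.
move=> lonesumA nzA le_d.
have sum_gt0 i : 0 < rowsum A i by have [j] := nzA i; apply: rowsum_gt0.
have sum_lt i : (rowsum A i).-1 < k by have := rowsum_le i; have := sum_gt0 i; lia.
pose type (i : 'I_n) : 'I_k := Ordinal (sum_lt i).
suff: #|'I_n| <= #|'I_k| * d by rewrite !card_ord.
apply: (card_le_mul_fibers (h := type)) => s.
case: (pickP [pred i | type i == s]) => [i0 /= /eqP <- | no_i]; last first.
  by rewrite eq_card0 // => i; rewrite inE; apply: no_i.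
apply: leq_trans (le_d i0); apply: subset_leq_card; apply/subsetP => i.
rewrite !inE => /eqP [eq_pred_sum]; apply/eqP/lonesum_row_eq => //.
by have := sum_gt0 i; have := sum_gt0 i0; lia.
Qed.

Lemma rows_at_most_fiber (f : 'I_n -> nat) d :
  (forall i i', row i A = row i' A -> f i = f i') ->
  (forall t, #|[set i | f i == t]| <= d) -> rows_at_most d A.
Proof.
move=> f_row le_fiber i; apply: leq_trans (le_fiber (f i)).
by apply: subset_leq_card; apply/subsetP => i'; rewrite !inE => /eqP /f_row ->.
Qed.

End RowTypes.

Lemma threshold_lonesum n k (x : 'I_n -> nat) (y : 'I_k -> nat) (A : 'M[bool]_(n, k)) :
  (forall i j, A i j = (y j < x i)) -> lonesum A.
Proof.
move=> defA B eq_rows eq_cols; apply/matrixP => i j.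
(* The difference A - B has the sign of the weight 2 x_i - 2 y_j - 1, which
   splits into a row term and a column term; equal margins make the weighted
   sum of A - B vanish, so every (nonnegative) term is zero. *)
pose diff a b : int := ((nat_of_bool (A a b))%:Z - (nat_of_bool (B a b))%:Z)%R.
pose w a b : int := (diff a b * ((2 * x a)%:Z - (2 * y b).+1%:Z))%R.
have sum_Posz := big_morph Posz PoszD (erefl (Posz 0)).
have w_ge0 a b : (0 <= w a b)%R.
  by rewrite /w /diff defA; case: (B a b); case: ltnP => /= ?; lia.
have row_diff a : (\sum_b diff a b = 0)%R.
  by rewrite sumrB -!sum_Posz; have := eq_rows a; rewrite /rowsum => ->; rewrite subrr.
have col_diff b : (\sum_a diff a b = 0)%R.
  by rewrite sumrB -!sum_Posz; have := eq_cols b; rewrite /colsum => ->; rewrite subrr.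
have sum_w : (\sum_a \sum_b w a b = 0)%R.
  rewrite /w; under eq_bigr => a _ do under eq_bigr => b _ do rewrite mulrBr.
  under eq_bigr => a _ do rewrite sumrB.
  rewrite sumrB; under eq_bigr => a _ do rewrite -mulr_suml row_diff mul0r.
  rewrite exchange_big /=; under [X in (_ - X)%R]eq_bigr => b _ do rewrite -mulr_suml col_diff mul0r.
  by rewrite !big1 // subrr.
have sum_wi := psumr_eq0P (fun a _ => sumr_ge0 _ (fun b _ => w_ge0 a b)) sum_w (i := i) isT.
have := psumr_eq0P (fun b _ => w_ge0 i b) sum_wi (i := j) isT.
by rewrite /w /diff defA; case: (B i j); case: ltnP => /= ?; lia.
Qed.

Definition staircase n k m : 'M[bool]_(n, k) := (\matrix_(i, j) (j %% m <= i %% m)%N)%R.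

Section Staircase.
Variables (n k m : nat).
Hypothesis m_gt0 : 0 < m.
Let S := staircase n k m.

Lemma staircase_lonesum : lonesum S.
Proof.
apply: (threshold_lonesum (x := fun i : 'I_n => (i %% m).+1)
                          (y := fun j : 'I_k => j %% m)) => i j.
by rewrite mxE.
Qed.

Lemma staircase_row_eq i i' : m <= k -> row i S = row i' S -> i %% m = i' %% m.
Proof.
move=> le_mk /rowP eq_row.
have entry (a : nat) : a < m -> (a <= i %% m) = (a <= i' %% m).
  move=> lt_am; have lt_ak : a < k by lia.
  by have := eq_row (Ordinal lt_ak); rewrite !mxE /= (modn_small lt_am).
by apply/eqP; rewrite eqn_leq -(entry _ (ltn_pmod i m_gt0)) (entry _ (ltn_pmod i' m_gt0)) !leqnn.
Qed.

Lemma staircase_col_eq j j' : m <= n -> col j S = col j' S -> j %% m = j' %% m.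
Proof.
move=> le_mn /colP eq_col.
have entry (a : nat) : a < m -> (j %% m <= a) = (j' %% m <= a).
  move=> lt_am; have lt_an : a < n by lia.
  by have := eq_col (Ordinal lt_an); rewrite !mxE /= (modn_small lt_am).
by apply/eqP; rewrite eqn_leq (entry _ (ltn_pmod j' m_gt0)) -(entry _ (ltn_pmod j m_gt0)) !leqnn.
Qed.

Lemma staircase_in_L d : m <= n -> m <= k -> n <= m * d -> k <= m * d -> in_L d S.
Proof.
move=> le_mn le_mk le_n le_k; split.
- exact: staircase_lonesum.
- by move=> i; exists (Ordinal (leq_trans m_gt0 le_mk)); rewrite mxE mod0n.
- move=> j; have lt_n : m.-1 < n by lia.
  exists (Ordinal lt_n); rewrite mxE /= (@modn_small m.-1); last by lia.
  by have := ltn_pmod j m_gt0; lia.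
- apply: (rows_at_most_fiber (f := fun i : 'I_n => i %% m)) => [i i'|t].
    exact: staircase_row_eq.
  exact: card_mod_fiber.
- apply/rows_at_most_trmx/(rows_at_most_fiber (f := fun j : 'I_k => j %% m)) => [j j'|t].
    by rewrite -!tr_col => /trmx_inj; apply: staircase_col_eq.
  exact: card_mod_fiber.
Qed.

End Staircase.

Lemma ceil_div_leq n d k : 0 < d -> ((n + d - 1) %/ d <= k) = (n <= k * d).
Proof. by move=> d_gt0; rewrite -ltnS ltn_divLR //; apply/idP/idP; lia. Qed.

Theorem mainTheorem5 (d n k : nat) (hd : 1 <= d) (hn : 1 <= n) (hk : 1 <= k) :
  (exists A : 'M[bool]_(n, k), in_L d A) <->
  ((n + d - 1) %/ d <= k /\ k <= n * d).
Proof.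
rewrite ceil_div_leq //; split.
- move=> [A [lonesumA nz_rows nz_cols le_rows le_cols]]; split.
    exact: lonesum_rows_bound lonesumA nz_rows le_rows.
  apply: (lonesum_rows_bound (lonesum_trmx lonesumA)).
    exact: no_zero_row_trmx.
  exact/rows_at_most_trmx.
- move=> [le_n le_k]; exists (staircase n k (minn n k)).
  by apply: staircase_in_L; rewrite /minn; case: (ltnP n k) => ?; nia.
Qed.
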